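(* Let $\mathcal{I}$ be an ideal on $\omega$ with $\mathrm{fin} \subseteq \mathcal{I}$. Fix a recursive injection $\sharp : \omega^{<\omega} \to \omega$, and for $f \in \omega^\omega$ let $e(f) \in \omega^\omega$ be the function $e(f)(n) = \sharp(f|_n)$. Suppose $T \subseteq \omega^\omega$ and $C : \omega^\omega \to [\omega]^\omega$ are such that (1) for every $f \in \omega^\omega$: $f \in T$ if and only if for all $g \in \omega^\omega$, $S(C(f), f, e(g)) \in \mathcal{I}$; (2) $C$ is injective and the image of $C$ is an $\mathcal{I}$-AD family. For $f \in \omega^\omega$ define $E(f) \in \omega^\omega$ by $E(f)(n) = f(n)$ if $f \in T$ and $n \in C(f)$, and $E(f)(n) = e(f)(n)$ otherwise. Then $\mathcal{E} = \{E(f) : f \in \omega^\omega\}$ is an $\mathcal{I}$-MED family. Moreover, if $\mathcal{I}$ and $T$ are Borel and $C$ is analytic, then $\mathcal{E}$ is analytic.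
   Context: $\mathrm{fin}$ is the ideal of finite subsets of $\omega$. For an ideal $\mathcal{I}$ on $\omega$, $\mathcal{I}^+ = \mathcal{P}(\omega)\setminus\mathcal{I}$ is the family of $\mathcal{I}$-positive sets. A family $\mathcal{A}$ is $\mathcal{I}$-AD if $\mathcal{A} \subseteq \mathcal{I}^+$ and $A \cap A' \in \mathcal{I}$ for all distinct $A, A' \in \mathcal{A}$. For functions $f,g$ and $X \subseteq \mathrm{dom}(f)\cap\mathrm{dom}(g)$, $S(X,f,g) = \{n \in X : f(n) = g(n)\}$. Functions $f,g \in \omega^\omega$ are $\mathcal{I}$-eventually different ($\mathcal{I}$-ED) if $\{n : f(n) = g(n)\} \in \mathcal{I}$. A set $\mathcal{E} \subseteq \omega^\omega$ is an $\mathcal{I}$-ED family if any two distinct members are $\mathcal{I}$-ED, and an $\mathcal{I}$-MED family ($\mathcal{I}$-maximal eventually different family) if moreover for every $h \in \omega^\omega$ there is $f \in \mathcal{E}$ such that $f,h$ are not $\mathcal{I}$-ED. Ideals are viewed as subsets of $2^\omega$ via characteristic functions when speaking of Borel/analytic. *)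

From HB Require Import structures.
From mathcomp Require Import all_boot all_order all_algebra.
From mathcomp Require Import all_classical all_reals topology measure.
Set Implicit Arguments. Unset Strict Implicit. Unset Printing Implicit Defensive.
Local Open Scope classical_set_scope.

(* Subsets of omega are represented by their characteristic functions
   nat -> bool (points of 2^omega). *)

Definition BaireSp : Type := {ptws nat -> nat}.
Definition CantorSp : Type := {ptws nat -> bool}.

Definition subsetb (X Y : nat -> bool) : Prop := forall n, X n -> Y n.
Definition unionb (X Y : nat -> bool) : nat -> bool := fun n => X n || Y n.
Definition interb (X Y : nat -> bool) : nat -> bool := fun n => X n && Y n.
Definition finite_nat (X : nat -> bool) : Prop := exists N, forall n, X n -> (n < N)%N.
Definition infinite_setb (X : nat -> bool) : Prop := forall N, exists n, (N <= n)%N /\ X n.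

Definition is_ideal (I : set (nat -> bool)) : Prop :=
  [/\ I (fun _ => false),
      (forall X Y, I Y -> subsetb X Y -> I X),
      (forall X Y, I X -> I Y -> I (unionb X Y)) &
      ~ I (fun _ => true)].

Definition contains_fin (I : set (nat -> bool)) : Prop :=
  forall X, finite_nat X -> I X.

Definition I_AD (I : set (nat -> bool)) (A : set (nat -> bool)) : Prop :=
  (forall X, A X -> ~ I X) /\
  (forall X Y, A X -> A Y -> X <> Y -> I (interb X Y)).

Definition Sagree (X : nat -> bool) (f g : nat -> nat) : nat -> bool :=
  fun n => X n && (f n == g n).

Definition I_ED (I : set (nat -> bool)) (f g : nat -> nat) : Prop :=
  I (fun n => f n == g n).

Definition I_ED_family (I : set (nat -> bool)) (E : set (nat -> nat)) : Prop :=
  forall f g, E f -> E g -> f <> g -> I_ED I f g.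

Definition I_MED_family (I : set (nat -> bool)) (E : set (nat -> nat)) : Prop :=
  I_ED_family I E /\ (forall h, exists2 f, E f & ~ I_ED I f h).

Definition restr (f : nat -> nat) (n : nat) : seq nat := mkseq f n.

Definition enc (code : seq nat -> nat) (f : nat -> nat) : nat -> nat :=
  fun n => code (restr f n).

Definition Emap (code : seq nat -> nat) (T : set (nat -> nat))
  (C : (nat -> nat) -> (nat -> bool)) (f : nat -> nat) : nat -> nat :=
  fun n => if `[< T f >] && C f n then f n else enc code f n.

Definition borel {X : topologicalType} (A : set X) : Prop :=
  <<s (@open X) >> A.

Definition analytic {X : topologicalType} (A : set X) : Prop :=
  A = set0 \/ exists g : BaireSp -> X, continuous g /\ range g = A.

Definition graph_fun (C : (nat -> nat) -> (nat -> bool)) : set (BaireSp * CantorSp) :=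
  [set p | C p.1 = p.2].

From HB Require Import structures.
From mathcomp Require Import all_boot all_order all_algebra.
From mathcomp Require Import all_classical all_reals topology measure.
Local Open Scope classical_set_scope.

(* Two distinct members E(f), E(g) can only agree on S(C f, f, e g) (when f is
   in T), on S(C g, g, e f) (when g is in T), on C f /\ C g, or where
   e f = e g.  The first two sets are in I by (1), the third by (2), and the
   last is finite because the codes of f|_n and g|_n differ once n passes the
   first disagreement of f and g.  Given h, either h is in T and E(h) = h on
   the I-positive set C h, or (1) yields g with S(C h, h, e g) positive; this
   set lies in {E g = h} up to C h /\ C g, which is in I.

   For analyticity, a continuous parametrisation g of the graph of C presents
   the family as the image of the Borel set (fst o g)^-1(T) under the
   continuous map sending y, with g y = (f, C f), to the function equal to f
   on C f and to e f elsewhere, together with the image of the complement of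
   T under e.  Borel subsets of Baire space are analytic: open sets are
   countable unions of closed cylinders, closed sets are retracts of Baire
   space, and analytic sets are closed under countable unions and
   intersections and continuous images. *)

(** * Prefix continuity on Baire space *)

Definition agree_below {V : Type} (m : nat) (x y : nat -> V) : Prop :=
  forall k, (k < m)%N -> y k = x k.

Lemma agree_below_le {V : Type} (m m' : nat) (x y : nat -> V) :
  (m <= m')%N -> agree_below m' x y -> agree_below m x y.
Proof. by move=> le_mm' xy k km; apply: xy; exact: leq_trans km le_mm'. Qed.

Lemma agree_below_maxn {V : Type} (m m' : nat) (x y : nat -> V) :
  agree_below (maxn m m') x y -> agree_below m x y /\ agree_below m' x y.
Proof. by move=> xy; split; apply: agree_below_le xy; rewrite ?leq_maxl ?leq_maxr. Qed.

Definition prefix_continuous {V : Type} (h : (nat -> nat) -> nat -> V) : Prop :=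
  forall x n, exists m, forall y, agree_below m x y -> h y n = h x n.

Lemma prefix_continuous_agree {V : Type} {h : (nat -> nat) -> nat -> V} :
  prefix_continuous h ->
  forall x m, exists m', forall y, agree_below m' x y -> agree_below m (h x) (h y).
Proof.
move=> hc x; elim=> [|m [m1 agree1]]; first by exists 0%N => y _ k.
have [m2 agree2] := hc x m.
exists (maxn m1 m2) => y /agree_below_maxn[/agree1 xy1 /agree2 xy2] k.
by rewrite ltnS leq_eqVlt => /orP[/eqP->|/xy1].
Qed.

Lemma prefix_continuous_comp {V : Type} {g : (nat -> nat) -> nat -> nat}
    {h : (nat -> nat) -> nat -> V} :
  prefix_continuous g -> prefix_continuous h -> prefix_continuous (h \o g).
Proof.
move=> gc hc x n; have [m hm] := hc (g x) n.
have [m' hm'] := prefix_continuous_agree gc x m.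
by exists m' => y /hm' /hm.
Qed.

Lemma nbhs_agree_below {V : discreteUniformType} (x : {ptws nat -> V})
    (A : set {ptws nat -> V}) :
  nbhs x A -> exists m, forall y, agree_below m x y -> A y.
Proof.
pose cyl : set_system {ptws nat -> V} :=
  [set B | exists m, forall y, agree_below m x y -> B y].
have cyl_filter : Filter cyl.
  split; first by exists 0%N.
  - move=> B B' [m hB] [m' hB']; exists (maxn m m').
    by move=> y /agree_below_maxn[/hB ? /hB' ?].
  - by move=> B B' BB' [m hB]; exists m => y /hB /BB'.
have : cyl --> x.
  apply/(pointwise_cvgP _ cyl_filter) => t B /= xtB; exists t.+1 => y xy /=.
  by rewrite xy //; exact: nbhs_singleton.
by move=> /(_ A).
Qed.

Lemma agree_below_nbhs {V : discreteUniformType} (x : {ptws nat -> V}) m :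
  nbhs x (agree_below m x).
Proof.
have nbhs_x_filter : Filter (nbhs x) := nbhs_filter x.
elim: m => [|m IH]; first by apply: filterS filterT => y _ k.
have xm : nbhs x [set y : {ptws nat -> V} | y m = x m].
  by have := @proj_continuous nat (fun=> V) m x [set x m] (discrete_set1 (x m)).
apply: filterS (filterI IH xm) => y [xy ym] k.
by rewrite ltnS leq_eqVlt => /orP[/eqP->|/xy].
Qed.

Lemma prefix_continuousP {V : discreteUniformType} (h : {ptws nat -> nat} -> {ptws nat -> V}) :
  prefix_continuous h <-> continuous h.
Proof.
split=> [hc x|hc x n].
  have nbhs_x_filter : Filter (nbhs x) := nbhs_filter x.
  apply/pointwise_cvgP => t B /= hB; have [m hm] := hc x t.
  apply: filterS (agree_below_nbhs x m) => y /hm /= ->.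
  exact: nbhs_singleton.
have /nbhs_agree_below[m hm] : nbhs (x : {ptws nat -> nat}) (h @^-1` agree_below n.+1 (h x)).
  exact: hc (agree_below_nbhs _ _).
by exists m => y /hm; apply.
Qed.

(** * Analytic subsets of Baire space *)

Definition baire_closed (F : set (nat -> nat)) : Prop :=
  forall y, (forall m, exists2 z, F z & agree_below m y z) -> F y.

Definition baire_analytic (A : set (nat -> nat)) : Prop :=
  A = set0 \/ exists2 h : (nat -> nat) -> nat -> nat, prefix_continuous h & range h = A.

Lemma baire_analytic_range {A : set (nat -> nat)} {x : nat -> nat} :
  baire_analytic A -> A x ->
  exists2 h : (nat -> nat) -> nat -> nat, prefix_continuous h & range h = A.
Proof. by case=> [->|//]. Qed.

Section closed_retract.
Variables (F : set (nat -> nat)) (z0 : nat -> nat).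
Hypotheses (F_closed : baire_closed F) (F_z0 : F z0).

Definition extendable (p : nat -> nat) (n : nat) : Prop :=
  exists2 z, F z & agree_below n p z.

(* The retraction copies its input as long as the prefix built so far still
   extends into F, and otherwise picks any value that keeps it extendable. *)
Definition retract_step (p : nat -> nat) (n v : nat) : nat :=
  if `[< extendable [eta p with n |-> v] n.+1 >] then v
  else xget 0%N (fun w => extendable [eta p with n |-> w] n.+1).

Fixpoint retract_prefix (x : nat -> nat) (n : nat) : nat -> nat :=
  if n is m.+1 then
    let p := retract_prefix x m in [eta p with m |-> retract_step p m (x m)]
  else fun=> 0%N.

Definition retract (x : nat -> nat) (n : nat) : nat := retract_prefix x n.+1 n.

Lemma retract_prefix_extendable x n : extendable (retract_prefix x n) n.
Proof.
elim: n => [|n [z Fz pz]]; first by exists z0.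
rewrite /= /retract_step; case: asboolP => // _.
apply: (@xgetPex _ 0%N (fun w => extendable [eta _ with n |-> w] n.+1)).
exists (z n), z => // k; rewrite ltnS leq_eqVlt /= => /orP[/eqP->|kn].
  by rewrite eqxx.
by rewrite ltn_eqF // pz.
Qed.

Lemma retract_prefixE x n k : (k < n)%N -> retract_prefix x n k = retract x k.
Proof.
elim: n => [//|n IH]; rewrite ltnS leq_eqVlt => /orP[/eqP->//|kn].
by rewrite /= ltn_eqF // IH.
Qed.

Lemma retract_in x : F (retract x).
Proof.
apply: F_closed => m; have [z Fz pz] := retract_prefix_extendable x m.
by exists z => // k km; rewrite pz // retract_prefixE.
Qed.

Lemma retract_prefix_agree {x y : nat -> nat} {n : nat} :
  agree_below n x y -> retract_prefix x n = retract_prefix y n.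
Proof.
elim: n => [//|n IH] xy /=.
by rewrite IH ?(xy n) //; apply: agree_below_le xy.
Qed.

Lemma prefix_continuous_retract : prefix_continuous retract.
Proof.
by move=> x n; exists n.+1 => y xy; rewrite /retract (retract_prefix_agree xy).
Qed.

Lemma retract_id y : F y -> retract y = y.
Proof.
move=> Fy.
have prefixE n : retract_prefix y n = fun k => if (k < n)%N then y k else 0%N.
  elim: n => [//|n IH] /=.
  have -> : retract_step (retract_prefix y n) n (y n) = y n.
    rewrite /retract_step asboolT //; exists y => // k.
    rewrite /= IH ltnS leq_eqVlt => /orP[/eqP->|kn]; first by rewrite eqxx.
    by rewrite ltn_eqF // kn.
  apply: funext => k /=; rewrite IH.
  case: (ltngtP k n) => [kn|kn|->]; last by rewrite ltnSn.
    by rewrite ltnS ltnW.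
  by rewrite ltnS leqNgt kn.
by apply: funext => n; rewrite /retract prefixE ltnSn.
Qed.

End closed_retract.

Lemma baire_analytic_closed F : baire_closed F -> baire_analytic F.
Proof.
move=> F_closed; have [[z0 F_z0]|F0] := pselect (exists z, F z); last first.
  by left; apply/seteqP; split => // x Fx; apply: F0; exists x.
right; exists (retract F); first exact: prefix_continuous_retract.
apply/seteqP; split => [_ [x _ <-]|y Fy]; first exact: (@retract_in _ z0).
by exists y => //; exact: retract_id.
Qed.

Lemma baire_analytic_image A (h : (nat -> nat) -> nat -> nat) :
  baire_analytic A -> prefix_continuous h -> baire_analytic (h @` A).
Proof.
move=> [->|[g gc <-]] hc; first by left; rewrite image_set0.
right; exists (h \o g); first exact: prefix_continuous_comp.
by rewrite image_comp.
Qed.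

Lemma baire_closed_agree_below m x : baire_closed (agree_below m x).
Proof. by move=> y /(_ m)[z xz yz] k km; rewrite -yz ?xz. Qed.

Lemma baire_analytic_bigcup (A : nat -> set (nat -> nat)) :
  (forall i, baire_analytic (A i)) -> baire_analytic (\bigcup_i A i).
Proof.
move=> anA; have [[i0 [x0 A_x0]]|A0] := pselect (exists i x, A i x); last first.
  by left; apply/seteqP; split => // x [i _ Aix]; apply: A0; exists i, x.
pose B i := if `[< exists x, A i x >] then A i else A i0.
have /choice[H HB] : forall i, exists h, prefix_continuous h /\ range h = B i.
  move=> i; rewrite /B; case: asboolP => [[x Aix]|_].
    by have [h ? ?] := baire_analytic_range (anA i) Aix; exists h.
  by have [h ? ?] := baire_analytic_range (anA i0) A_x0; exists h.
have BA : \bigcup_i B i = \bigcup_i A i.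
  apply/seteqP; split=> [x [i _]|x [i _ Aix]].
    by rewrite /B; case: asboolP => _ ?; [exists i|exists i0].
  by exists i; rewrite // /B asboolT //; exists x.
(* The first coordinate selects the piece, the remaining ones its argument. *)
right; exists (fun y => H (y 0%N) (fun k => y k.+1)).
  move=> x n; have [m hm] := (HB (x 0%N)).1 (fun k => x k.+1) n.
  exists m.+1 => y xy; rewrite (xy 0%N) //; apply: hm => k km; exact: xy.
rewrite -BA; apply/seteqP; split => [_ [y _ <-]|x [i _]].
  by exists (y 0%N) => //; rewrite -(HB _).2; exists (fun k => y k.+1).
rewrite -(HB i).2 => -[z _ <-].
by exists (fun k => if k is k'.+1 then z k' else i).
Qed.

Lemma baire_analytic_setU (A B : set (nat -> nat)) :
  baire_analytic A -> baire_analytic B -> baire_analytic (A `|` B).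
Proof.
move=> anA anB; have -> : A `|` B = \bigcup_i (if i is 0 then A else B).
  apply/seteqP; split => [x [Ax|Bx]|x [[|i] _ ?]]; by [exists 0%N|exists 1%N|left|right].
by apply: baire_analytic_bigcup => -[].
Qed.

Definition slice (i : nat) (y : nat -> nat) (k : nat) : nat := y (pickle (i, k)).

Lemma prefix_continuous_slice i : prefix_continuous (slice i).
Proof. by move=> x n; exists (pickle (i, n)).+1 => y xy; rewrite /slice xy. Qed.

Lemma baire_analytic_bigcap (A : nat -> set (nat -> nat)) :
  (forall i, baire_analytic (A i)) -> baire_analytic (\bigcap_i A i).
Proof.
move=> anA; have [[i Ai0]|A0] := pselect (exists i, A i = set0).
  by left; apply/seteqP; split => // x /(_ i I); rewrite Ai0.
have /choice[H HA] : forall i, exists h, prefix_continuous h /\ range h = A i.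
  by move=> i; case: (anA i) => [Ai0|[h ? ?]]; [case: A0; exists i|exists h].
pose G i := H i \o slice i.
have Gc i : prefix_continuous (G i).
  exact: prefix_continuous_comp (prefix_continuous_slice i) (HA i).1.
(* The intersection is the image under [G 0] of the closed set of points
   whose slices all have the same image. *)
pose F := [set y | forall i, G i y = G 0%N y].
have F_closed : baire_closed F.
  move=> y yF i; apply: funext => n.
  have [m1 h1] := Gc i y n; have [m2 h2] := Gc 0%N y n.
  have [z Fz /agree_below_maxn[yz1 yz2]] := yF (maxn m1 m2).
  by rewrite -(h1 z yz1) -(h2 z yz2) Fz.
suff -> : \bigcap_i A i = G 0%N @` F.
  by apply: baire_analytic_image (Gc 0%N); exact: baire_analytic_closed.
apply/seteqP; split => [x Ax|_ [y Fy <-] i _]; last first.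
  by rewrite -(Fy i) -(HA i).2; exists (slice i y).
have /choice[Z HZ] : forall i, exists z, H i z = x.
  by move=> i; have := Ax i I; rewrite -(HA i).2 => -[z _ <-]; exists z.
pose y n := if unpickle n is Some (i, k) then Z i k else 0%N.
have Gy i : G i y = x.
  by rewrite /G /= -[RHS](HZ i); congr (H i); apply: funext => k; rewrite /slice /y pickleK.
by exists y => [i|]; rewrite ?Gy.
Qed.

Lemma open_agree_below {U : set BaireSp} {x : BaireSp} : open U -> U x ->
  exists m, forall y, agree_below m x y -> U y.
Proof. by move=> /[swap] Ux; rewrite openE => /(_ x Ux) /nbhs_agree_below. Qed.

Lemma baire_closedC_open (U : set BaireSp) : open U -> baire_closed (~` U).
Proof.
move=> oU y yU Uy; have [m hm] := open_agree_below oU Uy.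
by have [z Uz /hm] := yU m.
Qed.

Lemma baire_analytic_open (U : set BaireSp) : open U -> baire_analytic U.
Proof.
move=> oU.
pose basic i : set (nat -> nat) := if unpickle i is Some s then
  if `[< agree_below (size s) (nth 0%N s) `<=` U >] then agree_below (size s) (nth 0%N s)
  else set0 else set0.
suff -> : U = \bigcup_i basic i.
  apply: baire_analytic_bigcup => i; rewrite /basic.
  case: unpickle => [s|]; last by left.
  by case: asboolP => _; [apply: baire_analytic_closed; exact: baire_closed_agree_below|left].
apply/seteqP; split => [x Ux|x [i _]]; last first.
  by rewrite /basic; case: unpickle => [s|//]; case: asboolP => // sU /sU.
have [m hm] := open_agree_below oU Ux.
exists (pickle (mkseq x m)) => //; rewrite /basic pickleK size_mkseq asboolT.
  by move=> k km; rewrite nth_mkseq.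
by move=> y xy; apply: hm => k km; rewrite xy // nth_mkseq.
Qed.

Lemma borel_baire_analytic (A : set BaireSp) : borel A -> baire_analytic A.
Proof.
pose both := [set B : set BaireSp | baire_analytic B /\ baire_analytic (~` B)].
suff : borel `<=` both by move=> sub /sub[].
apply: smallest_sub; last first.
  move=> U oU; split; first exact: baire_analytic_open.
  exact/baire_analytic_closed/baire_closedC_open.
split.
- by split; [left|rewrite setC0; apply: baire_analytic_closed].
- by move=> B [anB anCB]; rewrite setTD; split; rewrite ?setCK.
- move=> B anB; split; first by apply: baire_analytic_bigcup => i; case: (anB i).
  by rewrite setC_bigcup; apply: baire_analytic_bigcap => i; case: (anB i).
Qed.

Lemma borel_preimage {X Y : topologicalType} (phi : X -> Y) (B : set Y) :
  continuous phi -> borel B -> borel (phi @^-1` B).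
Proof.
move=> /continuousP phi_cont; rewrite -[phi @^-1` B]setTI.
apply: (@smallest_sub _ _ _ (image_set_system setT phi borel)) => //.
  exact/sigma_algebra_image/smallest_sigma_algebra.
by move=> U /phi_cont oU; apply: sub_sigma_algebra; rewrite /= setTI.
Qed.

Lemma baire_analytic_analytic (A : set BaireSp) : baire_analytic A -> analytic A.
Proof.
case=> [->|[h hc <-]]; first by left.
by right; exists h; split => //; exact/(prefix_continuousP (h : BaireSp -> BaireSp)).
Qed.

(** * The eventually different family *)

Section ideal.
Context {I : set (nat -> bool)} (I_ideal : is_ideal I).

Lemma ideal0 : I (fun=> false).
Proof. by case: I_ideal. Qed.

Lemma ideal_sub {X Y : nat -> bool} : I Y -> subsetb X Y -> I X.
Proof. by case: I_ideal => _ sub _ _ /sub; apply. Qed.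

Lemma ideal_union {X Y : nat -> bool} : I X -> I Y -> I (unionb X Y).
Proof. by case: I_ideal => _ _ union _; apply: union. Qed.

Lemma ideal_guard (b : bool) X : (b -> I X) -> I (fun n => b && X n).
Proof. by case: b => [/(_ isT) IX|_]; [apply: ideal_sub IX _|apply: ideal_sub ideal0 _]. Qed.

End ideal.

Section codes.
Variable code : seq nat -> nat.
Hypothesis code_inj : injective code.

Lemma enc_eq_agree_below f g n : enc code f n = enc code g n -> agree_below n f g.
Proof.
move=> /code_inj fg k kn.
by rewrite -(nth_mkseq 0%N f kn) -(nth_mkseq 0%N g kn) -[mkseq f n]/(restr f n) fg.
Qed.

Lemma finite_enc_eq f g : f <> g -> finite_nat (fun n => enc code f n == enc code g n).
Proof.
move=> fg; have [d fgd] : exists d, f d <> g d.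
  apply: contrapT => fg_eq; apply/fg/funext => d.
  by apply: contrapT => ?; apply: fg_eq; exists d.
exists d.+1 => n /eqP /enc_eq_agree_below fgn; rewrite ltnNge; apply/negP => dn.
exact/fgd/esym/fgn.
Qed.

End codes.

Lemma prefix_continuous_enc code : prefix_continuous (enc code).
Proof.
move=> x n; exists n => y xy; congr code; apply/eq_in_map => k.
by rewrite mem_iota => /andP[_ kn]; exact: xy.
Qed.

Section Emap.
Variables (code : seq nat -> nat) (T : set (nat -> nat)) (C : (nat -> nat) -> nat -> bool).
Local Notation E := (Emap code T C).

Lemma Emap_eq_sub f g :
  subsetb (fun n => E f n == E g n)
    (unionb (fun n => `[< T f >] && Sagree (C f) f (enc code g) n)
    (unionb (fun n => `[< T g >] && Sagree (C g) g (enc code f) n)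
    (unionb (fun n => `[< T f >] && `[< T g >] && interb (C f) (C g) n)
            (fun n => enc code f n == enc code g n)))).
Proof.
move=> n; rewrite /E /Emap /Sagree /interb /unionb.
by case: `[< T f >]; case: `[< T g >]; case: (C f n); case: (C g n) => /= /eqP->;
  rewrite ?eqxx ?orbT.
Qed.

Lemma Sagree_enc_sub f h :
  subsetb (Sagree (C h) h (enc code f))
    (unionb (fun n => E f n == h n) (fun n => `[< T f >] && interb (C h) (C f) n)).
Proof.
move=> n; rewrite /E /Emap /Sagree /interb /unionb.
by case: `[< T f >]; case: (C f n); case: (C h n) => //= /eqP->; rewrite ?eqxx ?orbT.
Qed.

Lemma Emap_eq_in {h : nat -> nat} : T h -> subsetb (C h) (fun n => E h n == h n).
Proof. by move=> Th n Chn; rewrite /E /Emap asboolT // Chn. Qed.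

Variable I : set (nat -> bool).
Hypotheses (I_ideal : is_ideal I) (I_fin : contains_fin I) (code_inj : injective code).
Hypotheses (T_E : forall f, T f <-> (forall g, I (Sagree (C f) f (enc code g))))
  (C_inj : injective C) (C_AD : I_AD I (range C)).

Lemma C_interb f g : f <> g -> I (interb (C f) (C g)).
Proof. by move=> fg; apply: C_AD.2; [exists f|exists g|move/C_inj]. Qed.

Lemma I_ED_family_Emap : I_ED_family I (range E).
Proof.
move=> _ _ [f _ <-] [g _ <-] Efg; have fg : f <> g by move=> fg; apply: Efg; rewrite fg.
apply: (ideal_sub I_ideal _ (Emap_eq_sub f g)); do ![apply: (ideal_union I_ideal)].
- by apply: (ideal_guard I_ideal) => /asboolP /T_E.
- by apply: (ideal_guard I_ideal) => /asboolP /T_E.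
- by apply: (ideal_guard I_ideal) => _; exact: C_interb.
- exact/I_fin/finite_enc_eq.
Qed.

Lemma Emap_maximal h : exists2 f, range E f & ~ I_ED I f h.
Proof.
have [Th|nTh] := pselect (T h).
  exists (E h); first by exists h.
  by move=> /(ideal_sub I_ideal) /(_ (Emap_eq_in Th)); apply: C_AD.1; exists h.
have /existsNP[f nISf] : ~ forall g, I (Sagree (C h) h (enc code g)) by rewrite -T_E.
exists (E f); first by exists f.
move=> IEf; apply/nISf/(ideal_sub I_ideal _ (Sagree_enc_sub f h)).
apply: (ideal_union I_ideal IEf); apply: (ideal_guard I_ideal) => /asboolP Tf.
by apply: C_interb => hf; apply: nTh; rewrite hf.
Qed.

End Emap.

Definition patch (code : seq nat -> nat) (p : (nat -> nat) * (nat -> bool)) : nat -> nat :=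
  fun n => if p.2 n then p.1 n else enc code p.1 n.

Lemma prefix_continuous_patch code (p1 : (nat -> nat) -> nat -> nat)
    (p2 : (nat -> nat) -> nat -> bool) :
  prefix_continuous p1 -> prefix_continuous p2 ->
  prefix_continuous (fun x => patch code (p1 x, p2 x)).
Proof.
move=> p1c p2c x n; have [m1 h1] := p1c x n; have [m2 h2] := p2c x n.
have [m3 h3] := prefix_continuous_comp p1c (prefix_continuous_enc code) x n.
exists (maxn m1 (maxn m2 m3)).
move=> y /agree_below_maxn[/h1 e1 /agree_below_maxn[/h2 e2 /h3 e3]].
by rewrite /patch /= e1 e2; move: e3 => /= ->.
Qed.

Lemma range_Emap code T C (g : BaireSp -> BaireSp * CantorSp) :
  range g = graph_fun C ->
  range (Emap code T C) = (patch code \o g) @` ((fst \o g) @^-1` T) `|` enc code @` (~` T).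
Proof.
move=> g_graph; have Emap_patch f : T f -> Emap code T C f = patch code (f, C f).
  by move=> Tf; apply: funext => n; rewrite /Emap /patch asboolT.
have Emap_enc f : ~ T f -> Emap code T C f = enc code f.
  by move=> nTf; apply: funext => n; rewrite /Emap asboolF.
apply/seteqP; split => [_ [f _ <-]|_ [[y Tgy <-]|[f nTf <-]]].
- have [Tf|nTf] := pselect (T f); last by right; exists f; rewrite ?Emap_enc.
  have [y _ gy] : range g (f, C f) by rewrite g_graph.
  by left; exists y; rewrite /= gy ?Emap_patch.
- have /esym Cgy : graph_fun C (g y) by rewrite -g_graph; exists y.
  by exists (g y).1 => //; rewrite Emap_patch //= -Cgy -surjective_pairing.
- by exists f; rewrite ?Emap_enc.
Qed.

Lemma analytic_range_Emap code T C :
  borel (T : set BaireSp) -> analytic (graph_fun C) ->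
  analytic (range (Emap code T C) : set BaireSp).
Proof.
move=> T_borel [graph0|[g [g_cont g_graph]]].
  by have : graph_fun C (point, C point) by []; rewrite graph0.
have fst_cont : continuous (fst \o g : BaireSp -> BaireSp).
  by move=> x; apply: continuous_comp (g_cont x) cvg_fst.
have snd_cont : continuous (snd \o g : BaireSp -> CantorSp).
  by move=> x; apply: continuous_comp (g_cont x) cvg_snd.
rewrite (@range_Emap code T C g g_graph); apply/baire_analytic_analytic/baire_analytic_setU.
- apply: baire_analytic_image.
    by apply: borel_baire_analytic; exact: borel_preimage fst_cont T_borel.
  by apply: prefix_continuous_patch; exact/prefix_continuousP.
- apply: baire_analytic_image (prefix_continuous_enc code).
  by apply: borel_baire_analytic; exact: sigma_algebraC.
Qed.

Theorem lemma3p1 (I : set (nat -> bool)) (code : seq nat -> nat)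
  (T : set (nat -> nat)) (C : (nat -> nat) -> (nat -> bool)) :
  is_ideal I -> contains_fin I ->
  injective code ->
  (forall f, infinite_setb (C f)) ->
  (forall f, T f <-> (forall g, I (Sagree (C f) f (enc code g)))) ->
  injective C ->
  I_AD I (range C) ->
  I_MED_family I (range (Emap code T C)) /\
  (borel (I : set CantorSp) -> borel (T : set BaireSp) -> analytic (graph_fun C) ->
   analytic (range (Emap code T C) : set BaireSp)).
Proof.
move=> I_ideal I_fin code_inj _ T_E C_inj C_AD; split=> [|_]; last exact: analytic_range_Emap.
by split; [exact: I_ED_family_Emap | exact: Emap_maximal].
Qed.
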